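(* Given $\alpha>0$ there exists $C>0$ such that for every $\rho>0$ and every $u\in C((-\rho,\rho))$, $$\ell^\alpha(\rho)\sup_{\varepsilon\in(0,\rho)}\ell^{-\alpha}(\varepsilon)\|\delta_\varepsilon u\|_{L^\infty(-\rho,\rho-\varepsilon)}\le C\Big(\operatorname{osc}_{(-\rho,\rho)}u+\ell^\alpha(\rho)\sup_{\varepsilon\in(0,\rho)}\ell^{-\alpha}(\varepsilon)\|\delta^2_\varepsilon u\|_{L^\infty(-\rho,\rho-2\varepsilon)}\Big),$$ where norms over empty intervals are interpreted as $0$.
   Context: $\ell(\rho):=|\ln(\min\{\rho,1/10\})|^{-1}$ for $\rho>0$. $\delta_\varepsilon u(x):=u(x+\varepsilon)-u(x)$ and $\delta^2_\varepsilon u(x):=u(x+2\varepsilon)-2u(x+\varepsilon)+u(x)$. $\operatorname{osc}_Eu:=\sup_Eu-\inf_Eu$. *)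

From HB Require Import structures.
From mathcomp Require Import all_boot all_order all_algebra.
From mathcomp Require Import all_classical all_reals all_analysis.
Set Implicit Arguments. Unset Strict Implicit. Unset Printing Implicit Defensive.
Import Order.TTheory GRing.Theory Num.Theory.
Import numFieldNormedType.Exports.
Local Open Scope classical_set_scope.
Local Open Scope ring_scope.

Definition ell {R : realType} (rho : R) : R := (`| ln (Num.min rho (10^-1)) |)^-1.

Definition delta1 {R : realType} (eps : R) (u : R -> R) (x : R) : R :=
  u (x + eps) - u x.
Definition delta2 {R : realType} (eps : R) (u : R -> R) (x : R) : R :=
  u (x + 2 * eps) - 2 * u (x + eps) + u x.

(* sup norm of f over the open interval (a,b), with value 0 over an empty
   interval (0 is adjoined to the set of values; since |f| >= 0 this only
   matters when the interval is empty). Possibly +oo. *)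
Definition supnorm {R : realType} (f : R -> R) (a b : R) : \bar R :=
  ereal_sup (0%E |` [set (`| f x |)%:E | x in `]a, b[]).

Definition osc {R : realType} (u : R -> R) (a b : R) : \bar R :=
  (ereal_sup [set (u x)%:E | x in `]a, b[] - ereal_inf [set (u x)%:E | x in `]a, b[])%E.

Definition wsup {R : realType} (alpha rho : R) (k : R)
    (D : R -> (R -> R) -> R -> R) (u : R -> R) : \bar R :=
  ereal_sup [set (((ell eps) `^ (- alpha))%:E * supnorm (D eps u) (- rho) (rho - k * eps))%E
            | eps in `]0, rho[].

From HB Require Import structures.
From mathcomp Require Import all_boot all_order all_algebra.
From mathcomp Require Import all_classical all_reals all_analysis.
From mathcomp Require Import lra ring.
Import Order.TTheory GRing.Theory Num.Theory.
Import numFieldNormedType.Exports.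
Local Open Scope classical_set_scope.
Local Open Scope ring_scope.

(* Since delta_eps u = (delta_{2 eps} u - delta^2_eps u) / 2, iterating k times
   bounds |delta_eps u| by 2^-k osc u + sum_{j<k} 2^-(j+1) |delta^2_{2^j eps} u|
   as long as 2^k eps fits in the interval (points of the right half are handled
   by reflecting u).  Stop when 2^k eps <= rho < 2^(k+1) eps.  The weight ell is
   slowly varying: ell^a(s t) <= K s^p ell^a(t) for s >= 1 and any p > 0, which
   follows from ln z <= z - 1.  With p = 1/2 the weighted sum is geometric, and
   with p = 1 the term ell^a(rho) 2^-k is a multiple of ell^a(eps). *)

Section slow_variation.
Context {R : realType}.
Implicit Types a b c p s t y : R.

Definition logscale t : R := `| ln (Num.min t 10^-1) |.

Lemma logscaleE t : 0 < t -> logscale t = - ln (Num.min t 10^-1).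
Proof.
move=> t0; rewrite /logscale ltr0_norm // ln_lt0 // lt_min t0 invr_gt0 ltr0n /=.
by rewrite gt_min invf_lt1 ?ltr0n ?ltr1n ?orbT.
Qed.

Lemma ln10_le_logscale {t} : 0 < t -> ln 10 <= logscale t.
Proof.
move=> t0; rewrite logscaleE // -[ln 10]opprK lerN2 -lnV ?posrE //.
by rewrite ler_ln ?posrE ?lt_min ?t0 ?invr_gt0 ?ltr0n // ge_min lexx orbT.
Qed.

Lemma ln10_gt0 : (0 : R) < ln 10.
Proof. by rewrite ln_gt0 // ltr1n. Qed.

Lemma logscale_gt0 {t} : 0 < t -> 0 < logscale t.
Proof. by move=> t0; have := ln10_le_logscale t0; have := ln10_gt0; lra. Qed.

Lemma logscale_le_mul {s t} : 1 <= s -> 0 < t -> logscale t <= logscale (s * t) + ln s.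
Proof.
move=> s1 t0; have s0 : 0 < s by lra.
have st0 : 0 < s * t by rewrite mulr_gt0.
have m0 : 0 < Num.min t 10^-1 by rewrite lt_min t0 invr_gt0 ltr0n.
have m1 : 0 < Num.min (s * t) 10^-1 by rewrite lt_min st0 invr_gt0 ltr0n.
have min_le : Num.min (s * t) 10^-1 <= s * Num.min t 10^-1.
  rewrite ge_min; have [_|lt] := leP t 10^-1; first by rewrite lexx.
  by apply/orP; right; lra.
have : ln (Num.min (s * t) 10^-1) <= ln (s * Num.min t 10^-1).
  by rewrite ler_ln ?posrE ?mulr_gt0.
rewrite lnM ?posrE // !logscaleE //; lra.
Qed.

Lemma powR_ellE a t : 0 < t -> ell t `^ a = expR (- (a * ln (logscale t))).
Proof.
move=> t0; rewrite /ell -/(logscale t) /powR ifN; last first.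
  by rewrite invr_eq0 gt_eqF ?logscale_gt0.
by rewrite lnV ?posrE ?logscale_gt0 // mulrN.
Qed.

Lemma powR_ell_gt0 a {t} : 0 < t -> 0 < ell t `^ a.
Proof. by move=> t0; rewrite powR_ellE // expR_gt0. Qed.

(* ln z <= z - 1 at z = (1 + y) c / b *)
Lemma mul_ln1D_le {b c y} : 0 < b -> 0 < c -> 0 <= y ->
  b * ln (1 + y) <= b * ln (b / c) + c + c * y.
Proof.
move=> b0 c0 y0; have z0 : 0 < (1 + y) * (c / b) by rewrite mulr_gt0 ?divr_gt0 //; lra.
have -> : 1 + y = (b / c) * ((1 + y) * (c / b)).
  by field; apply/andP; split; rewrite gt_eqF.
rewrite lnM ?posrE ?divr_gt0 // mulrDr.
have : ln ((1 + y) * (c / b)) <= (1 + y) * (c / b) - 1.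
  by have := @le_ln1Dx _ ((1 + y) * (c / b) - 1); rewrite addrCA subrr addr0; apply; lra.
rewrite -(ler_pM2l b0) => h.
have E : b * ((1 + y) * (c / b) - 1) = c + c * y - b by field; rewrite gt_eqF.
by rewrite E in h; lra.
Qed.

Definition ell_const a p : R := expR (a * ln (a / (p * ln 10)) + p * ln 10).

Lemma ell_const_gt0 a p : 0 < ell_const a p.
Proof. exact: expR_gt0. Qed.

Lemma powR_ell_mul_le {a p s t} : 1 <= s -> 0 < t -> 0 < a -> 0 < p ->
  ell (s * t) `^ a <= ell_const a p * ell t `^ a * s `^ p.
Proof.
move=> s1 t0 a0 p0; have s0 : 0 < s by lra.
have st0 : 0 < s * t by rewrite mulr_gt0.
have l10 := ln10_gt0.
rewrite !powR_ellE // /powR gt_eqF // -!expRD ler_expR.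
set y := ln s / ln 10.
have y0 : 0 <= y by apply: divr_ge0; [exact: ln_ge0 | exact: ltW].
have lns : ln s = y * ln 10 by rewrite /y mulfVK ?gt_eqF.
have log_le := logscale_le_mul s1 t0.
have ln10_le := ln10_le_logscale st0.
have log_le_mul : logscale t <= logscale (s * t) * (1 + y).
  have : ln 10 * y <= logscale (s * t) * y by exact: ler_wpM2r.
  rewrite mulrDr mulr1; lra.
have lnlog_le : ln (logscale t) <= ln (logscale (s * t)) + ln (1 + y).
  rewrite -lnM ?posrE ?logscale_gt0 //; last lra.
  by rewrite ler_ln ?posrE ?mulr_gt0 ?logscale_gt0 //; lra.
have cy : p * ln 10 * y = p * ln s by rewrite lns; ring.
have := mul_ln1D_le a0 (mulr_gt0 p0 l10) y0.
rewrite -(ler_pM2l a0) mulrDr in lnlog_le; rewrite /ell_const; lra.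
Qed.

End slow_variation.

Lemma delta1_double {R : realType} (eps : R) (u : R -> R) x :
  delta1 eps u x = (delta1 (2 * eps) u x - delta2 eps u x) / 2.
Proof. by rewrite /delta1 /delta2; field. Qed.

Lemma delta1_reflect {R : realType} (eps : R) (u : R -> R) x :
  delta1 eps (fun t => u (- t)) (- x - eps) = - delta1 eps u x.
Proof.
rewrite /delta1 (_ : - (- x - eps + eps) = x); last by ring.
by rewrite (_ : - (- x - eps) = x + eps) ?opprB //; ring.
Qed.

Lemma delta2_reflect {R : realType} (eps : R) (u : R -> R) x :
  delta2 eps (fun t => u (- t)) x = delta2 eps u (- x - 2 * eps).
Proof.
rewrite /delta2 (_ : - x - 2 * eps + 2 * eps = - x); last by ring.
rewrite (_ : - x - 2 * eps + eps = - (x + eps)); last by ring.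
by rewrite (_ : - (x + 2 * eps) = - x - 2 * eps) //; ring.
Qed.

Section dyadic_iteration.
Context {R : realType} {rho o : R} {g u : R -> R}.
Hypothesis osc_u : forall x y, -rho < x < rho -> -rho < y < rho -> `|u x - u y| <= o.
Hypothesis delta2_u : forall e x, 0 < e -> -rho < x -> x + 2 * e < rho ->
  `|delta2 e u x| <= g e.

Lemma delta1_le_dyadic k eps x : 0 < eps -> -rho < x -> x + 2 ^+ k * eps < rho ->
  `|delta1 eps u x| <= (2^-1) ^+ k * o + \sum_(j < k) (2^-1) ^+ j.+1 * g (2 ^+ j * eps).
Proof.
elim: k eps => [|k IH] eps eps0 x0 xk.
  rewrite big_ord0 addr0 expr0 mul1r; rewrite expr0 mul1r in xk.
  by apply: osc_u; apply/andP; split; lra.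
have IH2 : `|delta1 (2 * eps) u x| <=
    (2^-1) ^+ k * o + \sum_(j < k) (2^-1) ^+ j.+1 * g (2 ^+ j * (2 * eps)).
  by apply: IH; rewrite ?mulr_gt0 // mulrA -exprSr.
have D2 : `|delta2 eps u x| <= g eps.
  have k1 : 1 <= 2 ^+ k :> R by rewrite exprn_ege1 // ler1n.
  rewrite exprSr in xk.
  by apply: delta2_u => //; nra.
have shift : \sum_(j < k) (2^-1) ^+ (bump 0 j).+1 * g (2 ^+ bump 0 j * eps)
    = 2^-1 * \sum_(j < k) (2^-1) ^+ j.+1 * g (2 ^+ j * (2 * eps)).
  rewrite mulr_sumr; apply: eq_bigr => j _; rewrite /bump leq0n add1n.
  by rewrite mulrA -exprS mulrA -exprSr.
rewrite delta1_double normrM normfV normr_nat big_ord_recl /= shift expr0 mul1r expr1 exprS -mulrA.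
have := ler_normB (delta1 (2 * eps) u x) (delta2 eps u x); lra.
Qed.

End dyadic_iteration.

Lemma delta1_le_dyadic_sym {R : realType} {rho o : R} {g u : R -> R} {k eps x} :
  (forall x y, -rho < x < rho -> -rho < y < rho -> `|u x - u y| <= o) ->
  (forall e x, 0 < e -> -rho < x -> x + 2 * e < rho -> `|delta2 e u x| <= g e) ->
  0 < eps -> 2 ^+ k * eps <= rho -> -rho < x -> x + eps < rho ->
  `|delta1 eps u x| <= (2^-1) ^+ k * o + \sum_(j < k) (2^-1) ^+ j.+1 * g (2 ^+ j * eps).
Proof.
move=> osc_u delta2_u eps0 k_rho x0 x1.
have [xneg|xpos] := ltP x 0.
  by apply: (delta1_le_dyadic osc_u delta2_u) => //; lra.
have osc_v y z : -rho < y < rho -> -rho < z < rho -> `|u (- y) - u (- z)| <= o.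
  by move=> yI zI; apply: osc_u; lra.
have delta2_v e y : 0 < e -> -rho < y -> y + 2 * e < rho ->
    `|delta2 e (fun t => u (- t)) y| <= g e.
  by move=> e0 y0 y1; rewrite delta2_reflect; apply: delta2_u => //; lra.
rewrite -normrN -delta1_reflect; apply: (delta1_le_dyadic osc_v delta2_v) => //; lra.
Qed.

Lemma dyadic_bracket {R : realType} {x : R} : 1 <= x -> exists k, 2 ^+ k <= x < 2 ^+ k.+1.
Proof.
move=> x1; have [n xn] : exists n, x < 2 ^+ n.
  exists (Num.Def.archi_bound x); apply: lt_le_trans (archi_boundP _) _; first lra.
  by rewrite -natrX ler_nat ltnW // ltn_expl.
elim: n x x1 xn => [|n IH] x x1 xn; first by rewrite expr0 in xn; lra.
have [x2|x2] := ltP x 2; first by exists 0%N; rewrite expr0 expr1 x1 x2.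
have [k /andP[k1 k2]] : exists k, 2 ^+ k <= x / 2 < 2 ^+ k.+1.
  by apply: IH; [lra | rewrite exprSr in xn; lra].
by exists k.+1; rewrite !exprSr in k2 *; apply/andP; split; lra.
Qed.

Lemma powR2_lt2 {R : realType} {p : R} : p < 1 -> 2 `^ p < 2.
Proof.
move=> p1; rewrite /powR gt_eqF // -[X in _ < X]lnK ?posrE // ltr_expR.
by rewrite gtr_pMl // ln_gt0 // ltr1n.
Qed.

Lemma sum_dyadic_powR_ell_le {R : realType} (a p eps : R) k : 0 < a -> 0 < p < 1 -> 0 < eps ->
  \sum_(j < k) (2^-1) ^+ j.+1 * ell (2 ^+ j * eps) `^ a
  <= ell_const a p / (2 - 2 `^ p) * ell eps `^ a.
Proof.
move=> a0 /andP[p0 p1] eps0.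
set c := ell_const a p * ell eps `^ a / 2; set q := 2 `^ p / 2.
have c0 : 0 <= c by rewrite divr_ge0 // mulr_ge0 // ltW // ?ell_const_gt0 ?powR_ell_gt0.
have q0 : 0 < q by rewrite divr_gt0 // powR_gt0.
have q1 : q < 1 by rewrite ltr_pdivrMr // mul1r powR2_lt2.
apply: (@le_trans _ _ (\sum_(j < k) c * q ^+ j)).
  apply: ler_sum => j _.
  have := powR_ell_mul_le (exprn_ege1 j (ler1n R 2)) eps0 a0 p0.
  have -> : (2 ^+ j) `^ p = (2 `^ p) ^+ j :> R.
    by rewrite -powR_mulrn // powRAC powR_mulrn // powR_ge0.
  move=> le_j.
  have -> : c * q ^+ j = (2^-1) ^+ j.+1 * (ell_const a p * ell eps `^ a * (2 `^ p) ^+ j).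
    by rewrite /c /q exprMn exprS; ring.
  by apply: ler_wpM2l => //; exact: le_j.
have qn : `|q| < 1 by rewrite gtr0_norm.
have := geometric_le_lim k c0 q0 qn.
rewrite seriesEnat /= big_mkord.
suff -> : c / (1 - q) = ell_const a p / (2 - 2 `^ p) * ell eps `^ a by [].
have lt2 := powR2_lt2 p1.
by rewrite /c /q; field; rewrite subr_eq0 eq_sym lt_eqF.
Qed.

Definition dyadic_const {R : realType} (a : R) : R :=
  2 * ell_const a 1 + ell_const a 2^-1 / (2 - 2 `^ 2^-1).

Lemma dyadic_const_gt0 {R : realType} (a : R) : 0 < dyadic_const a.
Proof.
have lt2 : 2 `^ 2^-1 < 2 :> R by rewrite powR2_lt2 // invf_lt1 // ltr1n.
by rewrite addr_gt0 ?mulr_gt0 ?divr_gt0 ?ell_const_gt0 // invr_gt0 subr_gt0.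
Qed.

Lemma powR_ell_dyadic_le {R : realType} {a rho eps : R} {k} : 0 < a -> 0 < eps ->
  2 ^+ k <= rho / eps < 2 ^+ k.+1 -> ell rho `^ a * (2^-1) ^+ k <= 2 * ell_const a 1 * ell eps `^ a.
Proof.
move=> a0 eps0 /andP[k1 k2].
have rho_eps1 : 1 <= rho / eps := le_trans (exprn_ege1 k (ler1n R 2)) k1.
have := powR_ell_mul_le rho_eps1 eps0 a0 ltr01.
rewrite divfK ?gt_eqF // powRr1 ?(le_trans ler01 rho_eps1) // => L_le.
have kX : 2 ^+ k.+1 * (2^-1) ^+ k = 2 :> R by rewrite exprSr mulrAC -exprMn mulfV ?expr1n ?mul1r.
have X0 : 0 <= (2^-1 : R) ^+ k by rewrite exprn_ge0 // invr_ge0.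
have : rho / eps * (2^-1) ^+ k <= 2 by rewrite -[leRHS]kX ler_wpM2r // ltW.
have Kl0 : 0 <= ell_const a 1 * ell eps `^ a by rewrite mulr_ge0 // ltW ?ell_const_gt0 ?powR_ell_gt0.
move/(ler_wpM2l Kl0); have := ler_wpM2r X0 L_le; lra.
Qed.

Lemma powR_ell_delta1_le {R : realType} (a rho o w eps x : R) (u : R -> R) :
  0 < a -> 0 <= o -> 0 <= w ->
  (forall x y, -rho < x < rho -> -rho < y < rho -> `|u x - u y| <= o) ->
  (forall e x, 0 < e -> -rho < x -> x + 2 * e < rho -> `|delta2 e u x| <= w * ell e `^ a) ->
  0 < eps < rho -> -rho < x -> x + eps < rho ->
  ell rho `^ a * `|delta1 eps u x| <= dyadic_const a * (o + ell rho `^ a * w) * ell eps `^ a.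
Proof.
move=> a0 o0 w0 osc_u delta2_u /andP[eps0 eps_rho] x0 x1.
have [k kI] : exists k, 2 ^+ k <= rho / eps < 2 ^+ k.+1.
  by apply: dyadic_bracket; rewrite ler_pdivlMr // mul1r ltW.
set L := ell rho `^ a; set l := ell eps `^ a; set X := (2^-1 : R) ^+ k.
set S := \sum_(j < k) (2^-1) ^+ j.+1 * ell (2 ^+ j * eps) `^ a.
set K1 := ell_const a 1; set B := ell_const a 2^-1 / (2 - 2 `^ 2^-1).
have L0 : 0 < L := powR_ell_gt0 a (lt_trans eps0 eps_rho).
have l0 : 0 < l := powR_ell_gt0 a eps0.
have K10 : 0 < K1 := ell_const_gt0 a 1.
have B0 : 0 <= B by rewrite divr_ge0 ?subr_ge0 ?ltW ?ell_const_gt0 ?powR2_lt2 // invf_lt1 // ltr1n.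
have dyadic : `|delta1 eps u x| <= X * o + w * S.
  rewrite /S mulr_sumr; under eq_bigr do rewrite mulrCA.
  apply: (delta1_le_dyadic_sym osc_u delta2_u) => //.
  by case/andP: kI; rewrite -ler_pdivlMr.
have sum_le : S <= B * l.
  apply: sum_dyadic_powR_ell_le => //.
  by apply/andP; split; [rewrite invr_gt0 | rewrite invf_lt1 // ltr1n].
have := ler_wpM2l (ltW L0) dyadic.
have := ler_wpM2r o0 (powR_ell_dyadic_le a0 eps0 kI).
have := ler_wpM2l (mulr_ge0 (ltW L0) w0) sum_le.
have : 0 <= K1 * L * w * l by rewrite !mulr_ge0 // ltW.
have : 0 <= B * o * l by apply: mulr_ge0; [exact: mulr_ge0 | exact: ltW].
rewrite /dyadic_const -/L -/l -/K1 -/B -/X; lra.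
Qed.

Section extended_real_bounds.
Context {R : realType}.

Lemma supnorm_ge0 (f : R -> R) a b : (0 <= supnorm f a b)%E.
Proof. by apply: ereal_sup_ubound; left. Qed.

Lemma le_supnorm (f : R -> R) {a b x} : a < x < b -> ((`|f x|)%:E <= supnorm f a b)%E.
Proof. by move=> xI; apply: ereal_sup_ubound; right; exists x; rewrite //= in_itv. Qed.

Lemma supnorm_le (f : R -> R) a b M : 0 <= M ->
  (forall x, a < x < b -> `|f x| <= M) -> (supnorm f a b <= M%:E)%E.
Proof.
move=> M0 fM; apply: ge_ereal_sup => z [->|[x xI <-]]; first by rewrite lee_fin.
by move: xI; rewrite /= in_itv /= lee_fin => /fM.
Qed.

Lemma wsup_ge0 (alpha rho k : R) D u : 0 < rho -> (0 <= wsup alpha rho k D u)%E.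
Proof.
move=> rho0; have half : [set` `]0, rho[] (rho / 2) by rewrite /= in_itv /=; apply/andP; split; lra.
apply: le_trans (ereal_sup_ubound (imageP _ half)).
by rewrite mule_ge0 // ?lee_fin ?powR_ge0 ?supnorm_ge0.
Qed.

Lemma wsup_le (alpha rho k : R) D u M : 0 <= M ->
  (forall eps x, 0 < eps < rho -> - rho < x < rho - k * eps ->
     `|D eps u x| <= M * ell eps `^ alpha) ->
  (wsup alpha rho k D u <= M%:E)%E.
Proof.
move=> M0 DM; apply: ge_ereal_sup => _ [eps epsI <-].
move: epsI; rewrite /= in_itv /= => /andP[eps0 eps_rho].
have l0 := powR_ell_gt0 alpha eps0.
have : (supnorm (D eps u) (- rho) (rho - k * eps) <= (M * ell eps `^ alpha)%:E)%E.
  by apply: supnorm_le => [|x xI]; [rewrite mulr_ge0 // ltW | apply: DM; rewrite ?eps0].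
move/(lee_wpmul2l (_ : (0 <= (ell eps `^ (- alpha))%:E)%E)); rewrite lee_fin powR_ge0 => /(_ isT).
by rewrite -EFinM powRN mulrCA mulVf ?gt_eqF // mulr1.
Qed.

Lemma le_wsup {alpha rho k : R} {D u w eps x} : wsup alpha rho k D u = w%:E ->
  0 < eps < rho -> - rho < x < rho - k * eps ->
  `|D eps u x| <= w * ell eps `^ alpha.
Proof.
move=> Hw epsI xI; have /andP[eps0 _] := epsI.
have l0 := powR_ell_gt0 alpha eps0.
have : ((ell eps `^ (- alpha))%:E * supnorm (D eps u) (- rho) (rho - k * eps) <= w%:E)%E.
  by rewrite -Hw; apply: ereal_sup_ubound; exists eps; rewrite //= in_itv.
move/(le_trans (lee_wpmul2l _ (le_supnorm (D eps u) xI))).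
rewrite lee_fin powR_ge0 -EFinM lee_fin powRN => /(_ isT).
by rewrite -ler_pdivlMl ?invr_gt0 // invrK mulrC.
Qed.

Lemma osc_ge0 (u : R -> R) {a b} : a < b -> (0 <= osc u a b)%E.
Proof.
move=> ab; have mid : [set` `]a, b[] ((a + b) / 2) by rewrite /= in_itv /=; apply/andP; split; lra.
have := ereal_sup_ubound (imageP (fun x => (u x)%:E) mid).
have := ereal_inf_lbound (imageP (fun x => (u x)%:E) mid).
rewrite /osc; case: (ereal_inf _) => [i||]; case: (ereal_sup _) => [s||] //.
- rewrite !lee_fin => ? ?; change (0%:E <= (s - i)%:E)%E; rewrite lee_fin; lra.
- by rewrite addye.
- by rewrite addey.
- by move=> _ _; change (0%:E <= +oo :> \bar R)%E; rewrite leey.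
Qed.

Lemma le_osc {u : R -> R} {a b o} : osc u a b = o%:E ->
  forall x y, a < x < b -> a < y < b -> `|u x - u y| <= o.
Proof.
move=> + x y xI yI; have mem z : a < z < b -> [set` `]a, b[] z by move=> zI; rewrite /= in_itv.
have := ereal_sup_ubound (imageP (fun t => (u t)%:E) (mem x xI)).
have := ereal_sup_ubound (imageP (fun t => (u t)%:E) (mem y yI)).
have := ereal_inf_lbound (imageP (fun t => (u t)%:E) (mem x xI)).
have := ereal_inf_lbound (imageP (fun t => (u t)%:E) (mem y yI)).
rewrite /osc; case: (ereal_inf _) => [i||]; case: (ereal_sup _) => [s||] //.
rewrite !lee_fin => iy ix ys xs; change ((s - i)%:E = o%:E -> `|u x - u y| <= o); case=> <-.
by rewrite ler_norml; apply/andP; split; lra.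
Qed.

End extended_real_bounds.

Theorem lemma4p9 (R : realType) (alpha : R) :
  0 < alpha ->
  exists C : R, 0 < C /\
    forall (rho : R) (u : R -> R), 0 < rho ->
      {within `]- rho, rho[, continuous u} ->
      (((ell rho) `^ alpha)%:E * wsup alpha rho 1 delta1 u
       <= C%:E * (osc u (- rho) rho
                  + ((ell rho) `^ alpha)%:E * wsup alpha rho 2 delta2 u))%E.
Proof.
move=> alpha0; exists (dyadic_const alpha); split; first exact: dyadic_const_gt0.
move=> rho u rho0 _; have C0 := dyadic_const_gt0 alpha.
have L0 := powR_ell_gt0 alpha rho0; set L := ell rho `^ alpha in L0 *.
have rho_lt : - rho < rho by lra.
have := osc_ge0 u rho_lt; have := wsup_ge0 alpha rho 2 delta2 u rho0.
(* When the oscillation or the weighted second differences are infinite, so is the right-hand side. *)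
have Loo : (L%:E * +oo = +oo)%E by rewrite gt0_muley ?lte_fin.
have RHSoo : ((dyadic_const alpha)%:E * +oo = +oo)%E by rewrite gt0_muley ?lte_fin.
case Hw: (wsup _ _ _ _ _) => [w| |] w0; last by rewrite leeNy_eq in w0.
all: case Hosc: (osc _ _ _) => [oscu| |] oscu0; try by rewrite leeNy_eq in oscu0.
all: try by rewrite ?Loo ?addye ?addey // -?EFinM ?RHSoo leey.
rewrite !lee_fin in w0 oscu0.
have osc_u := le_osc Hosc.
have delta2_u e x : 0 < e -> - rho < x -> x + 2 * e < rho -> `|delta2 e u x| <= w * ell e `^ alpha.
  by move=> e0 x0 x1; apply: (le_wsup Hw); apply/andP; split; lra.
have W1 : (wsup alpha rho 1 delta1 u <= (dyadic_const alpha * (oscu + L * w) / L)%:E)%E.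
  have M0 : 0 <= dyadic_const alpha * (oscu + L * w).
    by apply: mulr_ge0; [exact: ltW | apply: addr_ge0 => //; exact: mulr_ge0 (ltW L0) w0].
  apply: wsup_le => [|eps x epsI /andP[x0 x1]]; first by rewrite divr_ge0 // ltW.
  rewrite -(ler_pM2l L0) mulrA [L * (_ / _)]mulrC divfK ?gt_eqF //.
  by apply: powR_ell_delta1_le => //; lra.
apply: le_trans (lee_wpmul2l _ W1) _; first by rewrite lee_fin ltW.
by rewrite -EFinM -EFinD -EFinM lee_fin mulrC divfK ?gt_eqF.
Qed.
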